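(* Let $X$ be a nontrivial real Banach space. Then $X$ has the diameter $2$ property if and only if $X^*$ is weakly octahedral.
   Context: $X$ has the diameter $2$ property if every nonempty relatively weakly open subset of the closed unit ball $B_X$ has diameter $2$. A Banach space $Z$ is weakly octahedral if for every finite-dimensional subspace $E$ of $Z$, every $z^*\in B_{Z^*}$, and every $\varepsilon>0$, there is a $y\in S_Z$ (unit sphere) such that $\|z+y\|\geq(1-\varepsilon)(|z^*(z)|+\|y\|)$ for all $z\in E$. *)

From HB Require Import structures.
From mathcomp Require Import all_boot all_order all_algebra.
From mathcomp Require Import all_classical all_reals all_analysis.
Set Implicit Arguments. Unset Strict Implicit. Unset Printing Implicit Defensive.
Import Order.TTheory GRing.Theory Num.Theory.
Import numFieldNormedType.Exports.
Local Open Scope classical_set_scope.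
Local Open Scope ring_scope.

Section Defs.
Variables (R : realType) (X : normedModType R).

Definition unit_ball : set X := [set x | `|x| <= 1].

Definition is_dual (f : X -> R) : Prop :=
  (forall (a : R) (x y : X), f (a *: x + y) = a * f x + f y) /\ continuous f.

Definition dual_norm (f : X -> R) : R :=
  sup [set r | exists x, `|x| <= 1 /\ r = `|f x|].

(* elements of the closed unit ball of the bidual X^** : linear functionals
   on X^* of norm <= 1 (boundedness, hence continuity, is then automatic) *)
Definition in_bidual_ball (Phi : (X -> R) -> R) : Prop :=
  (forall (a : R) (f g : X -> R), is_dual f -> is_dual g ->
      Phi (fun x => a * f x + g x) = a * Phi f + Phi g) /\
  (forall f, is_dual f -> `|Phi f| <= dual_norm f).

Definition weakly_open (U : set X) : Prop :=
  forall x, U x -> exists (n : nat) (fs : 'I_n -> X -> R) (e : R),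
    [/\ (forall i, is_dual (fs i)), 0 < e &
        forall y, (forall i, `|fs i y - fs i x| < e) -> U y].

Definition diam (W : set X) : R :=
  sup [set r | exists a b, [/\ W a, W b & r = `|a - b|]].

Definition diameter_two_property : Prop :=
  forall U : set X, weakly_open U -> U `&` unit_ball !=set0 ->
    diam (U `&` unit_ball) = 2.

(* X^* is weakly octahedral.  A finite-dimensional subspace E of X^* is the
   linear span of finitely many functionals fs 0, ..., fs (n-1). *)
Definition dual_weakly_octahedral : Prop :=
  forall (n : nat) (fs : 'I_n -> X -> R), (forall i, is_dual (fs i)) ->
  forall Phi : (X -> R) -> R, in_bidual_ball Phi ->
  forall eps : R, 0 < eps ->
  exists y : X -> R, [/\ is_dual y, dual_norm y = 1 &
    forall c : 'I_n -> R,
      let z := fun x => \sum_(i < n) c i * fs i x in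
      dual_norm (fun x => z x + y x) >= (1 - eps) * (`|Phi z| + dual_norm y)].

End Defs.

(* (=>) Given functionals f_1..f_n, Phi in the bidual ball and eps, Helly's
   theorem gives x in B_X with f_i(x) close to Phi(f_i).  The weak neighbourhood
   of x cut out by the f_i meets B_X in a set of diameter 2, so it contains
   u, v with ||u - v|| close to 2; a norming functional y of u - v is close to
   1 at u and to -1 at v.  Since norms are equivalent on span(f_i), every z in
   that span is close to Phi(z) at u and at v, uniformly in ||z||, whence
   ||z + y|| >= max (z(u) + y(u), -(z(v) + y(v))) is close to |Phi(z)| + 1.
   (<=) For a weak neighbourhood of w0 given by f_1..f_n, weak octahedrality at
   Phi = evaluation at w0 yields y with ||sum a_i f_i + t y|| >=
   (1 - eps)(|sum a_i f_i(w0)| + |t|).  By Helly's theorem this lets us find,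
   for s = 1 and s = -1, points of B_X in the neighbourhood where y is close
   to s; they are nearly 2 apart.  Both Helly's theorem and the norming
   functional come from a Hahn-Banach theorem proved by Zorn's lemma. *)

From HB Require Import structures.
From mathcomp Require Import all_boot all_order all_algebra.
From mathcomp Require Import all_classical all_reals all_analysis.
From mathcomp Require Import ring lra.
Import Order.TTheory GRing.Theory Num.Theory.
Import numFieldNormedType.Exports.
Local Open Scope classical_set_scope.
Local Open Scope ring_scope.
Set Implicit Arguments. Unset Strict Implicit.

Section LinearForms.
Variables (R : realType) (X : normedModType R).
Implicit Types (f g : X -> R) (x : X).

Definition linear_form f := forall (a : R) x y, f (a *: x + y) = a * f x + f y.
Definition bounded_form f := exists B : R, forall x, `|f x| <= B * `|x|.

Section Linear.
Variable f : X -> R.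
Hypothesis lf : linear_form f.

Lemma linear_form0 : f 0 = 0.
Proof. by have := lf 1 0 0; rewrite scaler0 addr0 mul1r => h; lra. Qed.

Lemma linear_formD x y : f (x + y) = f x + f y.
Proof. by rewrite -[x in LHS]scale1r lf mul1r. Qed.

Lemma linear_formZ a x : f (a *: x) = a * f x.
Proof. by rewrite -[_ *: _]addr0 lf linear_form0 addr0. Qed.

Lemma linear_formN x : f (- x) = - f x.
Proof. by rewrite -scaleN1r linear_formZ mulN1r. Qed.

Lemma linear_formB x y : f (x - y) = f x - f y.
Proof. by rewrite linear_formD linear_formN. Qed.

Lemma linear_form_bound (m : R) :
  (forall x, `|x| <= 1 -> `|f x| <= m) -> forall x, `|f x| <= m * `|x|.
Proof.
move=> hm x; have [->|x0] := eqVneq x 0.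
  by rewrite linear_form0 !normr0 mulr0.
have nx : 0 < `|x| by rewrite normr_gt0.
have := hm (`|x|^-1 *: x).
rewrite normrZ normfV normr_id mulVf ?gt_eqF // lexx => /(_ isT).
by rewrite linear_formZ normrM normfV normr_id ler_pdivrMl // mulrC.
Qed.

End Linear.

Lemma linear_form_sum (I : finType) (fs : I -> X -> R) (c : I -> R) :
  (forall i, linear_form (fs i)) -> linear_form (fun x => \sum_i c i * fs i x).
Proof.
move=> hl a x y; rewrite mulr_sumr -big_split /=; apply: eq_bigr => i _.
by rewrite (hl i); ring.
Qed.

Lemma bounded_form_pos f :
  bounded_form f -> exists2 B, 0 < B & forall x, `|f x| <= B * `|x|.
Proof.
case=> B hB; exists (`|B| + 1); first by rewrite ltr_pwDr // normr_ge0.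
move=> x; apply: (le_trans (hB x)); apply: ler_wpM2r; first exact: normr_ge0.
have := ler_norm B; lra.
Qed.

Lemma dual_norm_ub f x : bounded_form f -> `|x| <= 1 -> `|f x| <= dual_norm f.
Proof.
move=> /bounded_form_pos [B B0 hB] hx.
apply: ub_le_sup; last by exists x.
exists B => r [y [hy ->]]; apply: (le_trans (hB y)).
by rewrite -[leRHS]mulr1 ler_wpM2l // ltW.
Qed.

Lemma dual_norm_le f (c : R) :
  (forall x, `|x| <= 1 -> `|f x| <= c) -> dual_norm f <= c.
Proof.
move=> hc; apply: ge_sup; first by exists `|f 0|, 0; rewrite normr0 ler01.
by move=> r [y [hy ->]]; exact: hc.
Qed.

Lemma dual_norm_ge0 f : bounded_form f -> 0 <= dual_norm f.
Proof.
move=> hf; apply: (le_trans _ (dual_norm_ub (x := 0) hf _)); first exact: normr_ge0.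
by rewrite normr0 ler01.
Qed.

Lemma dual_norm_mul f x :
  linear_form f -> bounded_form f -> `|f x| <= dual_norm f * `|x|.
Proof. by move=> hl hb; apply: linear_form_bound => // y; exact: dual_norm_ub. Qed.

Lemma eq_dual_norm f g : f =1 g -> dual_norm f = dual_norm g.
Proof. by move=> /funext ->. Qed.

Lemma linear_bounded_continuous f :
  linear_form f -> bounded_form f -> continuous f.
Proof.
move=> hl /bounded_form_pos [B B0 hB] x; apply/cvgrPdist_lt => e e0.
apply/nbhs_normP; exists (e / B); first by rewrite /= divr_gt0.
move=> t /= ht; rewrite -linear_formB //; apply: (le_lt_trans (hB _)).
by rewrite -ltr_pdivlMl // mulrC.
Qed.

Lemma linear_continuous_bounded f :
  linear_form f -> continuous f -> bounded_form f.
Proof.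
move=> hl hc; have := hc 0 => /cvgrPdist_lt /(_ 1 ltr01).
rewrite linear_form0 // => /nbhs_normP [e /= e0 he].
exists (2 / e); apply: linear_form_bound => // x hx; apply: ltW.
have hy : ball_ Num.Def.normr 0 e ((e / 2) *: x).
  rewrite /ball_ /= sub0r normrN normrZ ger0_norm ?divr_ge0 ?ltW //.
  by apply: (le_lt_trans (ler_wpM2l _ hx)); rewrite ?divr_ge0 ?ltW // mulr1 ltr_pdivrMr // ltr_pMr // ltr1n.
have := he _ hy; rewrite /= sub0r normrN linear_formZ // normrM gtr0_norm ?divr_gt0 //.
by rewrite -ltr_pdivlMl ?divr_gt0 // invf_div mulr1.
Qed.

Lemma is_dual_linear f : is_dual f -> linear_form f.
Proof. by case. Qed.

Lemma is_dual_bounded f : is_dual f -> bounded_form f.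
Proof. by case=> hl hc; exact: linear_continuous_bounded. Qed.

Lemma is_dualI f : linear_form f -> bounded_form f -> is_dual f.
Proof. by move=> hl hb; split => //; exact: linear_bounded_continuous. Qed.

Lemma is_dual_sum (I : finType) (fs : I -> X -> R) (c : I -> R) :
  (forall i, is_dual (fs i)) -> is_dual (fun x => \sum_i c i * fs i x).
Proof.
move=> hd; apply: is_dualI.
  by apply: linear_form_sum => i; exact: is_dual_linear.
exists (\sum_i `|c i| * dual_norm (fs i)) => x; rewrite mulr_suml.
apply: (le_trans (ler_norm_sum _ _ _)); apply: ler_sum => i _.
rewrite normrM -mulrA ler_wpM2l //.
exact: dual_norm_mul (is_dual_linear (hd i)) (is_dual_bounded (hd i)).
Qed.

Lemma is_dualD f g : is_dual f -> is_dual g -> is_dual (fun x => f x + g x).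
Proof.
move=> hf hg; apply: is_dualI.
  by move=> a x y; rewrite (is_dual_linear hf) (is_dual_linear hg); ring.
have [B1 hB1] := is_dual_bounded hf; have [B2 hB2] := is_dual_bounded hg.
exists (B1 + B2) => x; apply: (le_trans (ler_normD _ _)); rewrite mulrDl.
exact: lerD.
Qed.

Lemma is_dualZ f (k : R) : is_dual f -> is_dual (fun x => k * f x).
Proof.
move=> hf; apply: is_dualI; first by move=> a x y; rewrite (is_dual_linear hf); ring.
have [B hB] := is_dual_bounded hf.
by exists (`|k| * B) => x; rewrite normrM -mulrA ler_wpM2l.
Qed.

Lemma dual_normZ f (k : R) :
  bounded_form f -> dual_norm (fun x => k * f x) = `|k| * dual_norm f.
Proof.
move=> hb; apply/eqP; rewrite eq_le; apply/andP; split.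
  by apply: dual_norm_le => x hx; rewrite normrM ler_wpM2l // dual_norm_ub.
have [->|k0] := eqVneq k 0.
  rewrite normr0 mul0r; apply: dual_norm_ge0; exists 0 => x.
  by rewrite !mul0r normr0.
have hb' : bounded_form (fun x => k * f x).
  case: hb => B hB; exists (`|k| * B) => x; rewrite normrM -mulrA ler_wpM2l //.
rewrite -ler_pdivlMl ?normr_gt0 //; apply: dual_norm_le => x hx.
rewrite -[f x](mulKf k0) normrM normfV ler_wpM2l ?invr_ge0 //.
exact: dual_norm_ub.
Qed.

End LinearForms.

Section HahnBanach.
Variables (R : realType) (V : lmodType R) (p : V -> R).
Hypothesis p_subadd : forall x y, p (x + y) <= p x + p y.
Hypothesis p_homo : forall t x, 0 < t -> p (t *: x) <= t * p x.

Let p0 : p 0 = 0.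
Proof.
have h1 := p_subadd 0 0; rewrite addr0 in h1.
have h2 : p 0 <= 2^-1 * p 0.
  by rewrite -[in leLHS](scaler0 _ 2^-1); apply: p_homo; rewrite invr_gt0.
lra.
Qed.

Let p_homoE t x : 0 < t -> p (t *: x) = t * p x.
Proof.
move=> t0; apply/eqP; rewrite eq_le p_homo //=.
have := @p_homo t^-1 (t *: x); rewrite invr_gt0 scalerA mulVf ?gt_eqF // scale1r.
move=> /(_ t0).
by rewrite -(ler_pM2l t0) mulrA mulfV ?gt_eqF // mul1r.
Qed.

(* Linear functionals on subspaces of [V] dominated by [p], encoded by their graphs. *)
Definition dominated_graph (G : set (V * R)) :=
  [/\ G (0, 0), (forall v r s, G (v, r) -> G (v, s) -> r = s),
      (forall a v r w s, G (v, r) -> G (w, s) -> G (a *: v + w, a * r + s)) &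
      (forall v r, G (v, r) -> r <= p v)].

Lemma dominated_graph_comb G a b v r w s : dominated_graph G ->
  G (v, r) -> G (w, s) -> G (a *: v + b *: w, a * r + b * s).
Proof.
case=> G00 _ Gc _ Gv Gw; have := Gc b w s 0 0 Gw G00.
by rewrite !addr0 => Gw'; exact: Gc.
Qed.

Definition line_graph (v0 : V) : set (V * R) :=
  [set vr | exists t, vr = (t *: v0, t * p v0)].

Lemma dominated_graph_line v0 : dominated_graph (line_graph v0).
Proof.
split.
- by exists 0; rewrite scale0r mul0r.
- move=> v r s [t [-> ->]] [t' [e ->]].
  have : (t - t') *: v0 = 0 by rewrite scalerBl e subrr.
  move/eqP; rewrite scaler_eq0 => /orP [|/eqP ->]; last by rewrite p0 !mulr0.
  by rewrite subr_eq0 => /eqP ->.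
- move=> a v r w s [t [-> ->]] [t' [-> ->]]; exists (a * t + t').
  by rewrite scalerA scalerDl mulrDl mulrA.
- move=> v r [t [-> ->]].
  have [t0|t0|->] := ltgtP t 0; last by rewrite scale0r mul0r p0.
    have -> : t *: v0 = (- t) *: (- v0) by rewrite scaleNr scalerN opprK.
    have := p_subadd v0 (- v0); rewrite subrr p0 p_homoE ?oppr_gt0 //; nra.
  by rewrite p_homoE.
Qed.

Lemma dominated_graph_bigcup (F : set (set (V * R))) :
  (forall G, F G -> G !=set0 -> dominated_graph G) -> total_on F subset ->
  (\bigcup_(G in F) G) !=set0 -> dominated_graph (\bigcup_(G in F) G).
Proof.
move=> Fdom Ftot [z [G0 FG0 G0z]].
have domF G y : F G -> G y -> dominated_graph G.
  by move=> FG Gy; apply: Fdom FG _; exists y.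
have common y1 y2 : (\bigcup_(G in F) G) y1 -> (\bigcup_(G in F) G) y2 ->
    exists2 G, F G & G y1 /\ G y2.
  move=> [G1 FG1 G1y] [G2 FG2 G2y]; case: (Ftot G1 G2 FG1 FG2) => h.
    by exists G2 => //; split => //; exact: h.
  by exists G1 => //; split => //; exact: h.
split.
- by exists G0 => //; case: (domF _ _ FG0 G0z).
- move=> v r s Ur Us; have [G FG [Gr Gs]] := common _ _ Ur Us.
  by case: (domF _ _ FG Gr) => _ hf _ _; exact: hf Gr Gs.
- move=> a v r w s Ur Us; have [G FG [Gr Gs]] := common _ _ Ur Us.
  by exists G => //; case: (domF _ _ FG Gr) => _ _ hc _; exact: hc Gr Gs.
- by move=> v r [G FG Gr]; case: (domF _ _ FG Gr) => _ _ _ hd; exact: hd Gr.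
Qed.

Definition graph_extension (A : set (V * R)) (w : V) (c : R) : set (V * R) :=
  [set vr | exists v r t, A (v, r) /\ vr = (v + t *: w, r + t * c)].

Lemma graph_extension_sub A w c : A `<=` graph_extension A w c.
Proof. by move=> [v r] Avr; exists v, r, 0; rewrite scale0r mul0r !addr0. Qed.

Section OneStep.
Variables (A : set (V * R)) (w : V).
Hypotheses (domA : dominated_graph A) (nw : forall r, ~ A (w, r)).

(* The extended value at [w] must lie between these two bounds, which are
   compatible by subadditivity of [p]. *)
Lemma extension_value : exists c,
  (forall v r, A (v, r) -> r - p (v - w) <= c) /\
  (forall v r, A (v, r) -> c <= p (v + w) - r).
Proof.
case: domA => A00 _ Acl Adom.
pose S := [set q | exists v r, A (v, r) /\ q = r - p (v - w)].
have Sbd v2 r2 : A (v2, r2) -> ubound S (p (v2 + w) - r2).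
  move=> A2 q [v1 [r1 [A1 ->]]].
  have := Adom _ _ (Acl 1 v1 r1 v2 r2 A1 A2); rewrite scale1r mul1r => h.
  have := p_subadd (v1 - w) (v2 + w).
  rewrite addrA addrAC subrK; lra.
have S0 : S !=set0 by exists (0 - p (0 - w)), 0, 0.
have hS : has_ubound S by exists (p (0 + w) - 0); exact: Sbd.
exists (sup S); split => [v r Avr|v r Avr]; first by apply: ub_le_sup => //; exists v, r.
by apply: ge_sup => //; exact: Sbd.
Qed.

Lemma graph_extension_dominated :
  exists c, dominated_graph (graph_extension A w c).
Proof.
have [c [cge cle]] := extension_value.
case: (domA) => A00 Afun Acl Adom.
exists c; split.
- exact: graph_extension_sub.
- move=> v r s [v1 [r1 [t1 [A1 [-> ->]]]]] [v2 [r2 [t2 [A2 [e ->]]]]].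
  have [et|tne] := eqVneq t1 t2.
    rewrite et in e *; have ev : v1 = v2 by apply: (addIr (t2 *: w)).
    by rewrite ev in A1; rewrite (Afun _ _ _ A1 A2).
  exfalso; apply: (@nw ((t1 - t2)^-1 * r2 + (- (t1 - t2)^-1) * r1)).
  have -> : w = (t1 - t2)^-1 *: v2 + (- (t1 - t2)^-1) *: v1.
    have e2 : (t1 - t2) *: w = v2 - v1.
      rewrite scalerBl; apply: (@addrI _ v1).
      by rewrite addrA e addrK [RHS]addrC subrK.
    by rewrite scaleNr -scalerBr -e2 scalerA mulVf ?scale1r // subr_eq0.
  exact: dominated_graph_comb.
- move=> a v r w' s [v1 [r1 [t1 [A1 [-> ->]]]]] [v2 [r2 [t2 [A2 [-> ->]]]]].
  exists (a *: v1 + v2), (a * r1 + r2), (a * t1 + t2); split; first exact: Acl.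
  congr pair; last by ring.
  by rewrite scalerDr scalerA scalerDl addrACA.
- move=> v r [v1 [r1 [t [A1 [-> ->]]]]].
  have [t0|t0|->] := ltgtP t 0; last by rewrite scale0r mul0r !addr0; exact: Adom.
    have A1' := dominated_graph_comb (- t)^-1 0 domA A1 A00.
    rewrite scale0r mulr0 !addr0 in A1'.
    have := cge _ _ A1'.
    have -> : v1 + t *: w = (- t) *: ((- t)^-1 *: v1 - w).
      by rewrite scalerBr scalerA mulfV ?gt_eqF ?oppr_gt0 // scale1r scaleNr opprK.
    rewrite p_homoE ?oppr_gt0 // -(ler_pM2l (_ : 0 < - t)) ?oppr_gt0 //.
    by rewrite mulrBr mulrA mulfV ?gt_eqF ?oppr_gt0 // mul1r; lra.
  have A1' := dominated_graph_comb t^-1 0 domA A1 A00.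
  rewrite scale0r mulr0 !addr0 in A1'.
  have := cle _ _ A1'.
  have -> : v1 + t *: w = t *: (t^-1 *: v1 + w).
    by rewrite scalerDr scalerA mulfV ?gt_eqF // scale1r.
  rewrite p_homoE // -(ler_pM2l t0) mulrBr mulrA mulfV ?gt_eqF // mul1r; lra.
Qed.

End OneStep.

(* Zorn's lemma is applied to the dominated graphs extending the line through
   [v0]; the empty set is admitted only so that the empty chain has an upper bound. *)
Lemma hahn_banach (v0 : V) :
  exists l : V -> R, [/\ forall a x y, l (a *: x + y) = a * l x + l y,
    forall x, l x <= p x & l v0 = p v0].
Proof.
pose G0 := line_graph v0.
pose P (G : set (V * R)) := G = set0 \/ (dominated_graph G /\ G0 `<=` G).
have P_ne G : P G -> G !=set0 -> dominated_graph G /\ G0 `<=` G by case=> // -> [].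
have [A [PA Amax]] : exists A, P A /\ forall B, A `<` B -> ~ P B.
  apply: Zorn_bigcup => F FP Ftot.
  have [Une|hz] := pselect ((\bigcup_(G in F) G) !=set0); last first.
    by left; apply/seteqP; split => // y Uy; apply: hz; exists y.
  have [z [G FG Gz]] := Une.
  have [_ G0G] := P_ne G (FP G FG) (ex_intro _ z Gz).
  right; split; last by move=> y G0y; exists G => //; exact: G0G.
  apply: dominated_graph_bigcup => // G' FG' G'ne.
  by case: (P_ne G' (FP G' FG') G'ne).
have Ane : A !=set0.
  case: PA => [A0|[[A00 _ _ _] _]]; last by exists (0, 0).
  exfalso; apply: (Amax G0); last by right; split => //; exact: dominated_graph_line.
  rewrite A0; split => // h.
  by have : (set0 : set (V * R)) (0, 0) by apply: h; exists 0; rewrite scale0r mul0r.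
have [domA G0A] := P_ne A PA Ane.
have tot w : exists r, A (w, r).
  apply/not_existsP => nw; have [c domE] := graph_extension_dominated domA nw.
  apply: (Amax (graph_extension A w c)).
    split; first exact: graph_extension_sub.
    move=> h; apply: (nw c); apply: h; exists 0, 0, 1; split; first by case: domA.
    by rewrite scale1r mul1r !add0r.
  by right; split => //; apply: subset_trans G0A _; exact: graph_extension_sub.
case: domA => A00 Afun Acl Adom.
pose l w := proj1_sig (cid (tot w)).
have Al w : A (w, l w) by rewrite /l; case: cid.
exists l; split.
- by move=> a x y; apply: (Afun (a *: x + y)) => //; exact: Acl.
- by move=> x; exact: Adom.
- by apply: (Afun v0) => //; apply: G0A; exists 1; rewrite scale1r mul1r.
Qed.

End HahnBanach.

Section Norming.
Variables (R : realType) (X : normedModType R).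

Lemma norming_functional (x0 : X) : exists y : X -> R,
  [/\ is_dual y, forall x, `|y x| <= `|x| & y x0 = `|x0|].
Proof.
have phom (t : R) (x : X) : 0 < t -> `|t *: x| <= t * `|x|.
  by move=> t0; rewrite normrZ gtr0_norm.
have [l [hl hle hl0]] := hahn_banach (@ler_normD _ X) phom x0.
have hab x : `|l x| <= `|x|.
  rewrite ler_norml hle andbT.
  by have := hle (- x); rewrite normrN (linear_formN hl); lra.
exists l; split => //; apply: is_dualI => //; exists 1 => x; rewrite mul1r.
exact: hab.
Qed.

Lemma norming_functional_unit (x0 : X) : x0 != 0 -> exists y : X -> R,
  [/\ is_dual y, dual_norm y = 1, forall x, `|y x| <= `|x| & y x0 = `|x0|].
Proof.
move=> x00; have [y [hy yb yx0]] := norming_functional x0.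
exists y; split => //; apply/eqP; rewrite eq_le; apply/andP; split.
  by apply: dual_norm_le => x hx; apply: le_trans (yb x) hx.
have nx : 0 < `|x0| by rewrite normr_gt0.
have := dual_norm_ub (x := `|x0|^-1 *: x0) (is_dual_bounded hy).
rewrite normrZ normfV normr_id mulVf ?gt_eqF // lexx => /(_ isT).
by rewrite (linear_formZ (is_dual_linear hy)) yx0 normrM normfV normr_id mulVf ?gt_eqF.
Qed.

End Norming.

Lemma ler_term_sum (R : numDomainType) (I : finType) (F : I -> R) (i : I) :
  (forall j, 0 <= F j) -> F i <= \sum_j F j.
Proof. by move=> h; rewrite (bigD1 i) //= lerDl; apply: sumr_ge0 => j _. Qed.

Lemma linear_fun_coord (R : realType) (I : finType) (l : (I -> R) -> R) :
  (forall a x y, l (a *: x + y) = a * l x + l y) ->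
  forall v, l v = \sum_i v i * l (fun j => (i == j)%:R).
Proof.
move=> hl v.
have l0 : l 0 = 0 by have := hl 1 0 0; rewrite scaler0 addr0 mul1r => h; lra.
have lD x y : l (x + y) = l x + l y by rewrite -[x in LHS]scale1r hl mul1r.
have lZ c x : l (c *: x) = c * l x by rewrite -[_ *: _]addr0 hl l0 addr0.
have ev : v = \sum_i v i *: (fun j => (i == j)%:R : R).
  apply/funext => j; rewrite fct_sumE (bigD1 j) //= scalrfctE /= eqxx big1 ?addr0.
    by change (v j = v j * 1); rewrite mulr1.
  move=> i /negbTE hij; rewrite scalrfctE /= hij.
  by change (v i * 0 = 0); rewrite mulr0.
by rewrite {1}ev (big_morph l lD l0); apply: eq_bigr => i _; rewrite lZ.
Qed.

Section Helly.
Variables (R : realType) (X : normedModType R) (I : finType).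
Variable gs : I -> X -> R.
Hypothesis gs_dual : forall i, is_dual (gs i).
Variable K : R.
Hypothesis K0 : 0 < K.

Let gs_lin i := is_dual_linear (gs_dual i).

(* A sublinear functional on [R^I]; a linear form below it is a combination
   of the [gs i] of dual norm at most one. *)
Definition helly_gauge (v : I -> R) : R :=
  inf [set r | exists x : X, r = `|x| + K * \sum_i `|v i - gs i x|].

Let gauge_set_ne v :
  [set r | exists x : X, r = `|x| + K * \sum_i `|v i - gs i x|] !=set0.
Proof. by exists (`|0 : X| + K * \sum_i `|v i - gs i 0|), 0. Qed.

Let gauge_set_lb v :
  has_lbound [set r | exists x : X, r = `|x| + K * \sum_i `|v i - gs i x|].
Proof.
exists 0 => r [x ->]; apply: addr_ge0 => //; apply: mulr_ge0; first exact: ltW.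
by apply: sumr_ge0 => i _.
Qed.

Lemma helly_gauge_le v x : helly_gauge v <= `|x| + K * \sum_i `|v i - gs i x|.
Proof. by apply: ge_inf => //; exists x. Qed.

Lemma helly_gauge_ge v c :
  (forall x, c <= `|x| + K * \sum_i `|v i - gs i x|) -> c <= helly_gauge v.
Proof. by move=> h; apply: lb_le_inf => // r [x ->]. Qed.

Lemma helly_gauge_lt v c : helly_gauge v < c ->
  exists x, `|x| + K * \sum_i `|v i - gs i x| < c.
Proof. by move=> /(inf_lt (gauge_set_ne v)) [r [x ->] hr]; exists x. Qed.

Lemma helly_gauge_subadd v w :
  helly_gauge (v + w) <= helly_gauge v + helly_gauge w.
Proof.
have h1 x x' : helly_gauge (v + w) <= (`|x| + K * \sum_i `|v i - gs i x|) +
                                       (`|x'| + K * \sum_i `|w i - gs i x'|).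
  apply: (le_trans (helly_gauge_le _ (x + x'))).
  have e1 := ler_normD x x'.
  have e2 : \sum_i `|(v + w) i - gs i (x + x')| <=
            \sum_i `|v i - gs i x| + \sum_i `|w i - gs i x'|.
    rewrite -big_split /=; apply: ler_sum => i _.
    rewrite (linear_formD (gs_lin i)).
    have -> : v i + w i - (gs i x + gs i x') = (v i - gs i x) + (w i - gs i x') by ring.
    exact: ler_normD.
  have e3 := ler_wpM2l (ltW K0) e2; lra.
have h2 x' : helly_gauge (v + w) - (`|x'| + K * \sum_i `|w i - gs i x'|) <= helly_gauge v.
  by apply: helly_gauge_ge => x; have := h1 x x'; lra.
have : helly_gauge (v + w) - helly_gauge v <= helly_gauge w.
  by apply: helly_gauge_ge => x'; have := h2 x'; lra.
lra.
Qed.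

Lemma helly_gauge_homo t v : 0 < t -> helly_gauge (t *: v) <= t * helly_gauge v.
Proof.
move=> t0; rewrite -ler_pdivrMl //; apply: helly_gauge_ge => x.
rewrite ler_pdivrMl //; apply: (le_trans (helly_gauge_le _ (t *: x))).
rewrite normrZ gtr0_norm // mulrDr lerD2l mulrCA; apply: ler_wpM2l; first exact: ltW.
rewrite mulr_sumr; apply: ler_sum => i _.
by rewrite (linear_formZ (gs_lin i)) /= -mulrBr normrM gtr0_norm.
Qed.

(* Hahn-Banach below the gauge, normalised at [b]. *)
Lemma helly_gauge_bound (b : I -> R) (M : R) : 0 < M ->
  (forall a : I -> R, \sum_i a i * b i <= M * dual_norm (fun x => \sum_i a i * gs i x)) ->
  helly_gauge b <= M.
Proof.
move=> M0 hyp.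
have [l [hl hlq hlb]] :=
  hahn_banach helly_gauge_subadd (fun t v t0 => helly_gauge_homo v t0) b.
pose a i := l (fun j => (i == j)%:R).
have gl x : \sum_i a i * gs i x = l (fun i => gs i x).
  by rewrite (linear_fun_coord hl); apply: eq_bigr => i _; rewrite mulrC.
have g_le x : \sum_i a i * gs i x <= `|x|.
  rewrite gl; apply: (le_trans (hlq _)); apply: (le_trans (helly_gauge_le _ x)).
  by rewrite big1 ?mulr0 ?addr0 // => i _; rewrite subrr normr0.
have g_norm : dual_norm (fun x => \sum_i a i * gs i x) <= 1.
  apply: dual_norm_le => x hx; apply: le_trans hx; rewrite ler_norml g_le andbT.
  have gN : \sum_i a i * gs i (- x) = - \sum_i a i * gs i x.
    by rewrite -sumrN; apply: eq_bigr => i _; rewrite (linear_formN (gs_lin i)) mulrN.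
  by have := g_le (- x); rewrite gN normrN; lra.
rewrite -hlb (linear_fun_coord hl).
have -> : \sum_i b i * l (fun j => (i == j)%:R) = \sum_i a i * b i.
  by apply: eq_bigr => i _; rewrite mulrC.
by apply: (le_trans (hyp a)); rewrite -[leRHS]mulr1 ler_wpM2l // ltW.
Qed.

End Helly.

Section HellyTheorem.
Variables (R : realType) (X : normedModType R) (I : finType).
Variables (gs : I -> X -> R) (b : I -> R) (M : R).
Hypotheses (M0 : 0 < M) (gs_dual : forall i, is_dual (gs i)).
Hypothesis hyp : forall a : I -> R,
  \sum_i a i * b i <= M * dual_norm (fun x => \sum_i a i * gs i x).

Lemma helly_approx d' d : 0 < d' -> 0 < d ->
  exists x : X, `|x| < M + d' /\ forall i, `|gs i x - b i| <= d.
Proof.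
move=> d'0 d0; pose K := (M + d') / d.
have Md0 : 0 < M + d' by rewrite addr_gt0.
have K0 : 0 < K by rewrite divr_gt0.
have qb : helly_gauge gs K b < M + d'.
  by apply: (le_lt_trans (helly_gauge_bound gs_dual K0 M0 hyp)); rewrite ltrDl.
have [x hx] := helly_gauge_lt qb.
have S0 : 0 <= \sum_i `|b i - gs i x| by apply: sumr_ge0.
have Sd : \sum_i `|b i - gs i x| <= d.
  rewrite -(ler_pM2l K0) (_ : K * d = M + d'); last by rewrite /K divfK ?gt_eqF.
  by have := normr_ge0 x; lra.
exists x; split; first by have := mulr_ge0 (ltW K0) S0; lra.
move=> i; rewrite distrC; apply: le_trans Sd.
exact: (ler_term_sum (F := fun i => `|b i - gs i x|)).
Qed.

(* Shrinking the vector of [helly_approx] by the factor [M / (M + d')] moves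
   the values by at most [d' / M] times their size. *)
Lemma helly d : 0 < d -> exists x : X, `|x| <= M /\ forall i, `|gs i x - b i| <= d.
Proof.
move=> d0; pose B := 1 + \sum_i `|b i|.
have bB i : `|b i| <= B.
  apply: (le_trans (ler_term_sum (F := fun i => `|b i|) i _)) => //.
  by rewrite /B lerDr.
have B0 : 0 < B by rewrite ltr_pwDl //; apply: sumr_ge0.
pose d' := d * M / (2 * B).
have d'0 : 0 < d' by rewrite /d' !divr_gt0 ?mulr_gt0.
have [x [Bx hx]] := helly_approx d'0 (divr_gt0 d0 (ltr0n R 2)).
have Md0 : 0 < M + d' by rewrite addr_gt0.
pose k := M / (M + d').
have k0 : 0 < k by rewrite divr_gt0.
have k1 : k < 1 by rewrite /k ltr_pdivrMr // mul1r ltrDl.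
have kB : (1 - k) * B = k * (d / 2).
  by rewrite /k /d'; field; rewrite (gt_eqF B0) /= gt_eqF // addr_gt0 ?mulr_gt0.
exists (k *: x); split.
  have kM : k * (M + d') = M by rewrite /k divfK // gt_eqF.
  by rewrite normrZ gtr0_norm // -[leRHS]kM ler_wpM2l ?ltW.
move=> i; rewrite (linear_formZ (is_dual_linear (gs_dual i))).
have -> : k * gs i x - b i = k * (gs i x - b i) - (1 - k) * b i by ring.
apply: (le_trans (ler_normB _ _)).
rewrite normrM (gtr0_norm k0) normrM (ger0_norm (_ : 0 <= 1 - k)); last by rewrite subr_ge0 ltW.
have h1 : k * `|gs i x - b i| <= k * (d / 2) by rewrite ler_pM2l.
have h2 : (1 - k) * `|b i| <= k * (d / 2).
  by rewrite -kB; apply: ler_wpM2l; [rewrite subr_ge0 ltW | exact: bB].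
have kd : k * (d / 2) <= d / 2 by rewrite ler_piMl ?divr_ge0 ?ltW.
lra.
Qed.

End HellyTheorem.

Definition ord_snoc (T : Type) n (d : 'I_n -> T) (c : T) (i : 'I_n.+1) : T :=
  if unlift ord_max i is Some j then d j else c.

Lemma widen_ord_lift n (j : 'I_n) : widen_ord (leqnSn n) j = lift ord_max j.
Proof. by apply: val_inj => /=; rewrite /bump leqNgt ltn_ord. Qed.

Lemma ord_snoc_widen T n (d : 'I_n -> T) c j :
  ord_snoc d c (widen_ord (leqnSn n) j) = d j.
Proof. by rewrite /ord_snoc widen_ord_lift liftK. Qed.

Lemma ord_snoc_max T n (d : 'I_n -> T) c : ord_snoc d c ord_max = c.
Proof. by rewrite /ord_snoc unlift_none. Qed.

Lemma big_ord_snoc (V : nmodType) T n (d : 'I_n -> T) c (F : 'I_n.+1 -> T -> V) :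
  \sum_(i < n.+1) F i (ord_snoc d c i) =
  \sum_(j < n) F (widen_ord (leqnSn n) j) (d j) + F ord_max c.
Proof.
rewrite big_ord_recr /= ord_snoc_max; congr (_ + _); apply: eq_bigr => j _.
by rewrite ord_snoc_widen.
Qed.

Lemma forall_ord_recr n (P : 'I_n.+1 -> Prop) :
  (forall j : 'I_n, P (widen_ord (leqnSn n) j)) -> P ord_max -> forall i, P i.
Proof.
move=> hw hm i; case: (unliftP ord_max i) => [j ->|->] //.
by rewrite -widen_ord_lift.
Qed.

Section FiniteFamilies.
Variables (R : realType) (X : normedModType R).

Lemma kernel_dichotomy n (fs : 'I_n -> X -> R) (h : X -> R) :
  (forall j, linear_form (fs j)) -> linear_form h ->
  (forall x, (forall j, fs j x = 0) -> h x = 0) \/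
  exists x1, (forall j, fs j x1 = 0) /\ h x1 = 1.
Proof.
move=> hfs hh; have [hc|hc] := pselect (forall x, (forall j, fs j x = 0) -> h x = 0).
  by left.
right; have [x0 [hx0 hh0]] : exists x0, (forall j, fs j x0 = 0) /\ h x0 != 0.
  apply: contrapT => hn; apply: hc => x hx; apply: contrapT => /eqP hne.
  by apply: hn; exists x.
exists ((h x0)^-1 *: x0); split; last by rewrite (linear_formZ hh) mulVf.
by move=> j; rewrite (linear_formZ (hfs j)) hx0 mulr0.
Qed.

Lemma linear_form_in_span n (fs : 'I_n -> X -> R) (g : X -> R) :
  (forall i, linear_form (fs i)) -> linear_form g ->
  (forall x, (forall i, fs i x = 0) -> g x = 0) ->
  exists d : 'I_n -> R, forall x, g x = \sum_i d i * fs i x.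
Proof.
elim: n fs g => [|n IH] fs g hfs hg hker.
  by exists (fun _ => 0) => x; rewrite big_ord0; apply: hker => -[].
pose fs' j := fs (widen_ord (leqnSn n) j).
have hfs' j : linear_form (fs' j) by exact: hfs.
have kerS x : (forall j, fs' j x = 0) -> fs ord_max x = 0 -> forall i, fs i x = 0.
  by move=> h1 h2; apply: forall_ord_recr.
have [hc|[x1 [hx1 hh1]]] := kernel_dichotomy hfs' (hfs ord_max).
  have [d hd] := IH fs' g hfs' hg (fun x hx => hker x (kerS x hx (hc x hx))).
  exists (ord_snoc d 0) => x.
  by rewrite (big_ord_snoc d 0 (fun i c => c * fs i x)) /= mul0r addr0 hd.
pose g' x := g x - g x1 * fs ord_max x.
have g'_lin : linear_form g' by move=> a x y; rewrite /g' hg (hfs ord_max); ring.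
have g'_ker x : (forall j, fs' j x = 0) -> g' x = 0.
  move=> hx; pose y := x - fs ord_max x *: x1.
  have hy : forall i, fs i y = 0.
    apply: kerS => [j|].
      by rewrite /y (linear_formB (hfs' j)) (linear_formZ (hfs' j)) hx hx1 mulr0 subr0.
    by rewrite /y (linear_formB (hfs _)) (linear_formZ (hfs _)) hh1 mulr1 subrr.
  by have := hker y hy; rewrite /y (linear_formB hg) (linear_formZ hg) /g'; lra.
have [d hd] := IH fs' g' hfs' g'_lin g'_ker.
exists (ord_snoc d (g x1)) => x.
by rewrite (big_ord_snoc d (g x1) (fun i c => c * fs i x)) /= -hd /g'; ring.
Qed.

(* A quantitative form of the equivalence of norms on the span of [fs]. *)
Definition span_coef_bounded n (fs : 'I_n -> X -> R) (C : R) :=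
  forall (c : 'I_n -> R) (m : R),
    (forall x, `|x| <= 1 -> `|\sum_i c i * fs i x| <= m) ->
    exists c' : 'I_n -> R, (forall x, \sum_i c' i * fs i x = \sum_i c i * fs i x)
      /\ \sum_i `|c' i| <= C * m.

Section SpanCoefBound.
Variables (n : nat) (fs : 'I_n.+1 -> X -> R) (C0 : R).
Let fs' j := fs (widen_ord (leqnSn n) j).
Hypotheses (hfs : forall i, is_dual (fs i)) (hC0 : span_coef_bounded fs' C0).

Let sum_split (c : 'I_n.+1 -> R) x : \sum_i c i * fs i x =
  \sum_j c (widen_ord (leqnSn n) j) * fs' j x + c ord_max * fs ord_max x.
Proof. by rewrite big_ord_recr. Qed.

Lemma span_coef_bounded_dep (e : 'I_n -> R) :
  (forall x, fs ord_max x = \sum_j e j * fs' j x) -> span_coef_bounded fs C0.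
Proof.
move=> he c m hm.
pose cc j := c (widen_ord (leqnSn n) j) + c ord_max * e j.
have ecc x : \sum_i c i * fs i x = \sum_j cc j * fs' j x.
  rewrite sum_split he mulr_sumr -big_split /=.
  by apply: eq_bigr => j _; rewrite /cc; ring.
have hm' x : `|x| <= 1 -> `|\sum_j cc j * fs' j x| <= m by rewrite -ecc; exact: hm.
have [c'' [hc1 hc2]] := hC0 hm'.
exists (ord_snoc c'' 0); split.
  by move=> x; rewrite (big_ord_snoc c'' 0 (fun i a => a * fs i x)) /= mul0r addr0 ecc; exact: hc1.
by rewrite (big_ord_snoc c'' 0 (fun _ a => `|a|)) /= normr0 addr0.
Qed.

Lemma span_coef_bounded_indep (x1 : X) :
  (forall j, fs' j x1 = 0) -> fs ord_max x1 = 1 ->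
  span_coef_bounded fs (C0 * (1 + `|x1| * dual_norm (fs ord_max)) + `|x1|).
Proof.
move=> hx1 hh1 c m hm.
have zb := linear_form_bound (linear_form_sum c (fun i => is_dual_linear (hfs i))) hm.
(* Evaluating at [x1] isolates the last coefficient. *)
have cm : `|c ord_max| <= m * `|x1|.
  have := zb x1; rewrite sum_split hh1 mulr1 big1 ?add0r //.
  by move=> j _; rewrite hx1 mulr0.
pose Bh := dual_norm (fs ord_max).
have hm' x : `|x| <= 1 ->
    `|\sum_j c (widen_ord (leqnSn n) j) * fs' j x| <= m * (1 + `|x1| * Bh).
  move=> hx; rewrite (_ : \sum_j _ = \sum_i c i * fs i x - c ord_max * fs ord_max x);
    last by rewrite sum_split addrK.
  apply: (le_trans (ler_normB _ _)); rewrite normrM.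
  have h2 : `|fs ord_max x| <= Bh by exact: dual_norm_ub (is_dual_bounded (hfs _)) hx.
  have h3 : `|c ord_max| * `|fs ord_max x| <= m * `|x1| * Bh by apply: ler_pM.
  by have := hm x hx; lra.
have [c'' [hc1 hc2]] := hC0 hm'.
exists (ord_snoc c'' (c ord_max)); split.
  move=> x; rewrite (big_ord_snoc c'' _ (fun i a => a * fs i x)) /= hc1.
  by rewrite [RHS]sum_split.
rewrite (big_ord_snoc c'' _ (fun _ a => `|a|)) /= -/Bh.
have : C0 * (m * (1 + `|x1| * Bh)) = C0 * (1 + `|x1| * Bh) * m by ring.
lra.
Qed.

End SpanCoefBound.

Lemma span_coef_bound n (fs : 'I_n -> X -> R) : (forall i, is_dual (fs i)) ->
  exists2 C : R, 0 <= C & span_coef_bounded fs C.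
Proof.
elim: n fs => [|n IH] fs hfs.
  by exists 0 => // c m _; exists c; split => //; rewrite big_ord0 mul0r.
pose fs' j := fs (widen_ord (leqnSn n) j).
have hl' j := is_dual_linear (hfs (widen_ord (leqnSn n) j)).
have [C0 C00 hC0] := IH fs' (fun j => hfs _).
have [hc|[x1 [hx1 hh1]]] := kernel_dichotomy hl' (is_dual_linear (hfs ord_max)).
  have [e he] := linear_form_in_span hl' (is_dual_linear (hfs ord_max)) hc.
  by exists C0 => //; exact: span_coef_bounded_dep he.
exists (C0 * (1 + `|x1| * dual_norm (fs ord_max)) + `|x1|).
  apply: addr_ge0 => //; apply: mulr_ge0 => //; apply: addr_ge0 => //.
  by apply: mulr_ge0 => //; exact: dual_norm_ge0 (is_dual_bounded (hfs ord_max)).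
exact: span_coef_bounded_indep.
Qed.

End FiniteFamilies.

Section Diameter.
Variables (R : realType) (X : normedModType R).

Lemma diam_far_points (W : set X) d : W !=set0 -> diam W = 2 -> 0 < d ->
  exists u v, [/\ W u, W v & 2 - d < `|u - v|].
Proof.
move=> [w Ww] hW d0.
have Dne : [set r | exists a b, [/\ W a, W b & r = `|a - b|]] !=set0.
  by exists `|w - w|, w, w.
have : 2 - d < diam W by rewrite hW; lra.
by move=> /(sup_gt Dne) [_ [u [v [Wu Wv ->]]] huv]; exists u, v.
Qed.

Lemma diam_eq2 (W : set X) : W `<=` @unit_ball R X -> W !=set0 ->
  (forall d, 0 < d -> exists u v, [/\ W u, W v & 2 - d <= `|u - v|]) -> diam W = 2.
Proof.
move=> WB [w Ww] far.
rewrite /diam; set D := [set r | _].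
have Dne : D !=set0 by exists `|w - w|, w, w.
have Dub : ubound D 2.
  move=> r [a [b [Wa Wb ->]]]; apply: (le_trans (ler_normB _ _)).
  by have := WB _ Wa; have := WB _ Wb; rewrite /unit_ball /=; lra.
apply/eqP; rewrite eq_le ge_sup //= leNgt; apply/negP => hlt.
have d0 : 0 < (2 - sup D) / 2 by rewrite divr_gt0 // subr_gt0.
have [u [v [Wu Wv huv]]] := far _ d0.
have Duv : D `|u - v| by exists u, v.
by have := ub_le_sup (ex_intro _ 2 Dub) Duv; lra.
Qed.

Lemma weakly_open_nbhd n (fs : 'I_n -> X -> R) (x0 : X) (dl : R) :
  (forall i, is_dual (fs i)) ->
  weakly_open [set w | exists2 r, r < dl & forall i, `|fs i w - fs i x0| <= r].
Proof.
move=> hfs w [r rdl hr]; exists n, fs, ((dl - r) / 2); split => //.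
  by rewrite divr_gt0 // subr_gt0.
move=> w' hw'; exists (r + (dl - r) / 2) => [|i]; first lra.
have := ler_normD (fs i w' - fs i w) (fs i w - fs i x0).
by rewrite addrA subrK; have := hw' i; have := hr i; lra.
Qed.

Lemma diameter_two_norming_pair : diameter_two_property X ->
  forall U : set X, weakly_open U -> U `&` @unit_ball R X !=set0 ->
  forall dl, 0 < dl -> dl <= 1 -> exists u v y,
    [/\ (U `&` @unit_ball R X) u, (U `&` @unit_ball R X) v, is_dual y, dual_norm y = 1 &
        1 - dl < y u /\ y v < -1 + dl].
Proof.
move=> d2 U hU hne dl dl0 dl1.
have [u [v [Wu Wv huv]]] := diam_far_points hne (d2 U hU hne) dl0.
have uv0 : u - v != 0 by rewrite -normr_gt0; lra.
have [y [hy ny yb yuv]] := norming_functional_unit uv0.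
exists u, v, y; split => //.
move: Wu Wv => [_ Bu] [_ Bv]; rewrite /unit_ball /= in Bu Bv.
rewrite (linear_formB (is_dual_linear hy)) in yuv.
have := le_trans (yb v) Bv; have := le_trans (yb u) Bu.
rewrite !ler_norml => /andP [? ?] /andP [? ?]; lra.
Qed.

End Diameter.

Section Bidual.
Variables (R : realType) (X : normedModType R) (Phi : (X -> R) -> R).
Hypothesis hPhi : in_bidual_ball Phi.

Lemma bidual_sum n (fs : 'I_n -> X -> R) (c : 'I_n -> R) :
  (forall i, is_dual (fs i)) ->
  Phi (fun x => \sum_i c i * fs i x) = \sum_i c i * Phi (fs i).
Proof.
case: hPhi => hPl _; elim: n fs c => [|n IH] fs c hfs.
  have hz : is_dual (fun _ : X => 0 : R).
    apply: is_dualI => [a x y|]; first by rewrite mulr0 addr0.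
    by exists 0 => x; rewrite normr0 mul0r.
  have := hPl 1 _ _ hz hz; rewrite big_ord0.
  have -> : (fun x : X => \sum_(i < 0) c i * fs i x) = (fun _ => 0).
    by apply/funext => x; rewrite big_ord0.
  have -> : (fun x : X => 1 * (0 : R) + 0) = (fun _ => 0).
    by apply/funext => x; rewrite mulr0 addr0.
  lra.
have -> : (fun x => \sum_(i < n.+1) c i * fs i x) =
    (fun x => c ord_max * fs ord_max x +
      \sum_(i < n) c (widen_ord (leqnSn n) i) * fs (widen_ord (leqnSn n) i) x).
  by apply/funext => x; rewrite big_ord_recr addrC.
by rewrite hPl ?IH ?big_ord_recr 1?addrC //; apply: is_dual_sum.
Qed.

Lemma bidual_helly n (fs : 'I_n -> X -> R) : (forall i, is_dual (fs i)) ->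
  forall d, 0 < d -> exists x : X, `|x| <= 1 /\ forall i, `|fs i x - Phi (fs i)| <= d.
Proof.
move=> hfs; apply: (helly ltr01 hfs) => a.
rewrite mul1r -bidual_sum //; apply: (le_trans (ler_norm _)).
by case: hPhi => _; apply; exact: is_dual_sum.
Qed.

Lemma bidual_span_approx n (fs : 'I_n -> X -> R) : (forall i, is_dual (fs i)) ->
  exists2 C, 0 <= C & forall (w : X) (dl : R) (c : 'I_n -> R), 0 <= dl ->
    (forall i, `|fs i w - Phi (fs i)| <= dl) ->
    `|\sum_i c i * fs i w - Phi (fun x => \sum_i c i * fs i x)| <=
    C * dl * dual_norm (fun x => \sum_i c i * fs i x).
Proof.
move=> hfs; have [C C0 hC] := span_coef_bound hfs.
exists C => // w dl c dl0 hw; pose z x := \sum_i c i * fs i x.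
change (`|z w - Phi z| <= C * dl * dual_norm z).
have hz : is_dual z := is_dual_sum c hfs.
have [c' [ec' hc']] := hC c _ (fun x hx => dual_norm_ub (is_dual_bounded hz) hx).
have -> : z w - Phi z = \sum_i c' i * (fs i w - Phi (fs i)).
  have -> : Phi z = \sum_i c' i * Phi (fs i).
    by rewrite -bidual_sum //; congr Phi; apply/funext => x; rewrite ec'.
  by rewrite /z -ec' -sumrB; apply: eq_bigr => i _; rewrite mulrBr.
apply: (le_trans (ler_norm_sum _ _ _)).
apply: (@le_trans _ _ (\sum_i `|c' i| * dl)).
  by apply: ler_sum => i _; rewrite normrM ler_wpM2l.
by rewrite -mulr_suml; have := ler_wpM2r dl0 hc'; nra.
Qed.

End Bidual.

Lemma octahedral_estimate (R : realType) (ep dl C m L P zu zv yu yv : R) :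
  0 < ep -> ep <= 1 / 2 -> 0 <= C -> 0 <= m -> 0 < dl -> dl * (ep + 4 * C) = ep ^+ 2 ->
  zu + yu <= L -> - (zv + yv) <= L ->
  `|zu - P| <= C * (2 * dl) * m -> `|zv - P| <= C * (2 * dl) * m ->
  1 - dl < yu -> yv < -1 + dl -> m <= L + 1 -> `|P| <= m ->
  (1 - ep) * (`|P| + 1) <= L.
Proof.
move=> ep0 ep2 C0 m0 dl0 dlE Lu Lv eu ev hyu hyv Lm Pm.
move: eu ev; rewrite !ler_norml => /andP [eu1 eu2] /andP [ev1 ev2].
have hP : `|P| + 1 - dl * (1 + 2 * C * m) <= L.
  by case: (lerP 0 P) => hp; [rewrite ger0_norm //|rewrite ltr0_norm //]; lra.
(* If [ep * m <= 2] the error term is at most [ep]; otherwise [m] is so large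
   that [m <= L + 1] alone suffices. *)
have [hm|hm] := lerP (ep * m) 2; last by nra.
have h1 : ep * (dl * (1 + 2 * C * m)) <= ep * ep.
  have : dl * (2 * C * (ep * m)) <= dl * (4 * C).
    apply: ler_wpM2l; first exact: ltW.
    have -> : 4 * C = 2 * C * 2 by ring.
    by apply: ler_wpM2l => //; apply: mulr_ge0.
  by rewrite expr2 in dlE; move=> h; rewrite -dlE; nra.
have h2 : dl * (1 + 2 * C * m) <= ep by rewrite -(ler_pM2l ep0).
nra.
Qed.

Section DiameterTwoToOctahedral.
Variables (R : realType) (X : normedModType R).

Lemma dual_norm_add_bounds (z y : X -> R) (u v : X) :
  is_dual z -> is_dual y -> dual_norm y = 1 -> `|u| <= 1 -> `|v| <= 1 ->
  [/\ z u + y u <= dual_norm (fun x => z x + y x),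
      - (z v + y v) <= dual_norm (fun x => z x + y x) &
      dual_norm z <= dual_norm (fun x => z x + y x) + 1].
Proof.
move=> hz hy ny Bu Bv; set L := dual_norm _.
have hL x : `|x| <= 1 -> `|z x + y x| <= L.
  by move=> hx; exact: dual_norm_ub (is_dual_bounded (is_dualD hz hy)) hx.
split; first exact: le_trans (ler_norm _) (hL u Bu).
  by have := hL v Bv; have := ler_norm (- (z v + y v)); rewrite normrN; lra.
apply: dual_norm_le => x hx; rewrite -[z x](addrK (y x)).
apply: (le_trans (ler_normB _ _)); apply: lerD; first exact: hL.
by rewrite -ny; exact: dual_norm_ub (is_dual_bounded hy) hx.
Qed.

Lemma dual_weakly_octahedral_of_diameter_two :
  diameter_two_property X -> dual_weakly_octahedral X.
Proof.
move=> d2 n fs hfs Phi hPhi eps eps0.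
pose ep := Num.min eps (1 / 2).
have ep0 : 0 < ep by rewrite lt_min eps0 divr_gt0.
have epe : ep <= eps by rewrite ge_min lexx.
have ep2 : ep <= 1 / 2 by rewrite ge_min lexx orbT.
have [C C0 approx] := bidual_span_approx hPhi hfs.
pose dl := ep ^+ 2 / (ep + 4 * C).
have epC : 0 < ep + 4 * C by have := mulr_ge0 (ler0n R 4) C0; lra.
have dl0 : 0 < dl by rewrite divr_gt0 // exprn_gt0.
have dlE : dl * (ep + 4 * C) = ep ^+ 2 by rewrite divfK // gt_eqF.
have dl1 : dl <= 1.
  have : ep * ep <= 1 * (ep + 4 * C) by rewrite ler_pM //; lra.
  by rewrite -expr2 -dlE ler_pM2r.
have [x1 [Bx1 hx1]] := bidual_helly hPhi hfs dl0.
pose U := [set w | exists2 r, r < dl & forall i, `|fs i w - fs i x1| <= r].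
have Une : U `&` @unit_ball R X !=set0.
  by exists x1; split => //; exists 0 => // i; rewrite subrr normr0.
have [u [v [y [[Uu Bu] [Uv Bv] hy ny [yu yv]]]]] :=
  diameter_two_norming_pair d2 (weakly_open_nbhd (x0 := x1) (dl := dl) hfs) Une dl0 dl1.
exists y; split => // c /=; rewrite ny.
pose z x := \sum_i c i * fs i x.
have hz : is_dual z by exact: is_dual_sum.
have near w : U w -> `|z w - Phi z| <= C * (2 * dl) * dual_norm z.
  move=> [r rdl hr]; apply: approx => [|i]; first by have := ltW dl0; lra.
  have := ler_normD (fs i w - fs i x1) (fs i x1 - Phi (fs i)).
  by rewrite addrA subrK; have := hr i; have := hx1 i; lra.
have [Lu Lv Lm] := dual_norm_add_bounds hz hy ny Bu Bv.
have Pm : `|Phi z| <= dual_norm z by case: hPhi => _; apply.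
apply: le_trans (octahedral_estimate ep0 ep2 C0 (dual_norm_ge0 (is_dual_bounded hz))
  dl0 dlE Lu Lv (near u Uu) (near v Uv) yu yv Lm Pm).
by apply: ler_wpM2r; [apply: addr_ge0 | lra].
Qed.

End DiameterTwoToOctahedral.

Section OctahedralToDiameterTwo.
Variables (R : realType) (X : normedModType R).
Variables (n : nat) (fs : 'I_n -> X -> R) (y : X -> R) (w0 : X) (t : R).
Hypotheses (hfs : forall i, is_dual (fs i)) (hy : is_dual y) (Bw0 : `|w0| <= 1).
Hypotheses (t0 : 0 < t) (t1 : t < 1).
Hypothesis hoct : forall c : 'I_n -> R,
  (1 - t) * (`|\sum_i c i * fs i w0| + 1) <=
  dual_norm (fun x => \sum_i c i * fs i x + y x).

Lemma octahedral_homogeneous (a : 'I_n -> R) (s : R) :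
  (1 - t) * (`|\sum_i a i * fs i w0| + `|s|) <=
  dual_norm (fun x => \sum_i a i * fs i x + s * y x).
Proof.
have hg := is_dual_sum a hfs.
have [->|s0] := eqVneq s 0.
  rewrite normr0 addr0 (@eq_dual_norm _ _ _ (fun x => \sum_i a i * fs i x)).
    apply: le_trans (dual_norm_ub (is_dual_bounded hg) Bw0).
    by apply: ler_piMl; [exact: normr_ge0 | rewrite gerBl ltW].
  by move=> x; rewrite mul0r addr0.
have := hoct (fun i => a i / s).
rewrite (@eq_dual_norm _ _ _ (fun x => s^-1 * (\sum_i a i * fs i x + s * y x))); last first.
  move=> x; rewrite mulrDr mulr_sumr mulKf //; congr (_ + _).
  by apply: eq_bigr => i _; ring.
rewrite dual_normZ; last exact/is_dual_bounded/is_dualD/is_dualZ.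
have -> : \sum_i a i / s * fs i w0 = s^-1 * \sum_i a i * fs i w0.
  by rewrite mulr_sumr; apply: eq_bigr => i _; ring.
rewrite normrM normfV => h.
have sp : 0 < `|s| by rewrite normr_gt0.
rewrite -(ler_pM2l (_ : 0 < `|s|^-1)) ?invr_gt0 //; apply: le_trans h.
by rewrite mulrCA mulrDr mulVf ?gt_eqF.
Qed.

(* Helly's theorem applied to the family [fs, y] with prescribed values
   [fs i w0] and [s]. *)
Lemma octahedral_point (s : R) : `|s| = 1 -> exists u : X,
  [/\ `|u| <= 1, forall i, `|fs i u - fs i w0| <= t * (1 + `|fs i w0|) &
      `|y u - s| <= 2 * t].
Proof.
move=> s1; have t1' : 0 < 1 - t by rewrite subr_gt0.
have hgs i : is_dual (ord_snoc fs y i) by rewrite /ord_snoc; case: unlift.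
have hyp (a : 'I_n.+1 -> R) :
    \sum_i a i * ord_snoc (fun i => fs i w0) s i <=
    (1 - t)^-1 * dual_norm (fun x => \sum_i a i * ord_snoc fs y i x).
  rewrite (big_ord_snoc _ _ (fun i c => a i * c)) /=.
  rewrite (eq_dual_norm (fun x => big_ord_snoc fs y (fun i f => a i * f x))) /=.
  have := octahedral_homogeneous (fun j => a (widen_ord (leqnSn n) j)) (a ord_max).
  set S := \sum_j _; set D := dual_norm _ => hk.
  rewrite [leRHS]mulrC ler_pdivlMr //.
  have h1 : S <= `|S| by exact: ler_norm.
  have h2 : a ord_max * s <= `|a ord_max|.
    by rewrite -[leRHS]mulr1 -s1 -normrM ler_norm.
  nra.
have Mp : 0 < (1 - t)^-1 by rewrite invr_gt0.
have [x [Bx hx]] := helly Mp hgs hyp t0.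
have shrink (r : R) : `|r| <= t -> (1 - t) * `|r| <= t.
  move=> hr; apply: le_trans (ler_wpM2l (ltW t1') hr) _.
  by apply: ler_piMl; [exact: ltW | rewrite gerBl ltW].
exists ((1 - t) *: x); split.
- rewrite normrZ gtr0_norm //; apply: le_trans (ler_wpM2l (ltW t1') Bx) _.
  by rewrite mulfV ?gt_eqF.
- move=> i; have := hx (widen_ord (leqnSn n) i); rewrite !ord_snoc_widen => hi.
  rewrite (linear_formZ (is_dual_linear (hfs i))).
  have -> : (1 - t) * fs i x - fs i w0 = (1 - t) * (fs i x - fs i w0) - t * fs i w0 by ring.
  apply: (le_trans (ler_normB _ _)); rewrite normrM (gtr0_norm t1') normrM (gtr0_norm t0).
  by have := shrink _ hi; lra.
- have := hx ord_max; rewrite !ord_snoc_max => hi.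
  rewrite (linear_formZ (is_dual_linear hy)).
  have -> : (1 - t) * y x - s = (1 - t) * (y x - s) - t * s by ring.
  apply: (le_trans (ler_normB _ _)); rewrite normrM (gtr0_norm t1') normrM (gtr0_norm t0) s1.
  by have := shrink _ hi; lra.
Qed.

End OctahedralToDiameterTwo.

Lemma diameter_two_of_dual_weakly_octahedral (R : realType) (X : normedModType R) :
  dual_weakly_octahedral X -> diameter_two_property X.
Proof.
move=> hwo U hU [w0 [Uw0 Bw0]]; rewrite /unit_ball /= in Bw0.
apply: diam_eq2; [by move=> ? [] | by exists w0 | move=> d d0].
have [n [fs [e [hfs e0 hnb]]]] := hU w0 Uw0.
pose Bw := \sum_i `|fs i w0|.
have Bw_ge0 : 0 <= Bw by apply: sumr_ge0.
pose t := Num.min (Num.min (1 / 2) (d / 4)) (e / (2 * (1 + Bw))).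
have t0 : 0 < t by rewrite !lt_min !divr_gt0 // mulr_gt0 // ltr_pwDl.
have t12 : t <= 1 / 2 by rewrite !ge_min lexx.
have td : t <= d / 4 by rewrite !ge_min lexx orbT.
have te : t * (1 + Bw) <= e / 2.
  have : t <= e / (2 * (1 + Bw)) by rewrite ge_min lexx orbT.
  by rewrite ler_pdivlMr ?mulr_gt0 ?ltr_pwDl //; lra.
have t1 : t < 1 by lra.
have hPhi : in_bidual_ball (fun f : X -> R => f w0).
  by split => // f hf; exact: dual_norm_ub (is_dual_bounded hf) Bw0.
have [y [hy ny hy2]] := hwo n fs hfs _ hPhi t t0.
have hoct c : (1 - t) * (`|\sum_i c i * fs i w0| + 1) <=
    dual_norm (fun x => \sum_i c i * fs i x + y x).
  by have := hy2 c; rewrite /= ny.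
have near u : (forall i, `|fs i u - fs i w0| <= t * (1 + `|fs i w0|)) -> U u.
  move=> hu; apply: hnb => i; apply: le_lt_trans (hu i) _.
  have : t * (1 + `|fs i w0|) <= t * (1 + Bw).
    by rewrite ler_pM2l // lerD2l; exact: (ler_term_sum (F := fun i => `|fs i w0|)).
  lra.
have n1 : `|(-1 : R)| = 1 by rewrite normrN normr1.
have [u [Bu hu yu]] := octahedral_point hfs hy Bw0 t0 t1 hoct (normr1 R).
have [v [Bv hv yv]] := octahedral_point hfs hy Bw0 t0 t1 hoct n1.
exists u, v; split; [by split => //; exact: near | by split => //; exact: near |].
have := dual_norm_mul (u - v) (is_dual_linear hy) (is_dual_bounded hy).
rewrite ny mul1r (linear_formB (is_dual_linear hy)).
move: yu yv; rewrite !ler_norml => /andP [? ?] /andP [? ?] h.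
by have := ler_norm (y u - y v); lra.
Qed.

Unset Implicit Arguments.

Theorem theorem3p4 (R : realType) (X : completeNormedModType R)
  (nontriv : exists x : X, x != 0) :
  diameter_two_property X <-> dual_weakly_octahedral X.
Proof.
split.
- exact: dual_weakly_octahedral_of_diameter_two.
- exact: diameter_two_of_dual_weakly_octahedral.
Qed.
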